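(* Let $q\neq 2$ be a prime power with $q\equiv -1\pmod 3$, let $G=\mathrm{SU}_3(q)$, and let $\mathcal{C}=C_3^{(0,l)}$ for some $0\leq l\leq 2$. Then $K_{\mathcal{C}}$ is irreducible.
   Context: $\mathrm{SU}_3(q)$ is the group of determinant-one matrices $M\in\mathrm{GL}_3(q^2)$ with $M^*JM=J$, where $J$ has ones on the anti-diagonal and zeros elsewhere and $M^*$ is the transpose of $M$ with every entry raised to the $q$-th power. Let $\xi$ be a generator of $\mathbb{F}_{q^2}^\times$. For $0\leq l\leq 2$, $C_3^{(0,l)}$ is the $\mathrm{SU}_3(q)$-conjugacy class of $\begin{pmatrix}1&\xi^{l(q-1)}&\alpha\\0&1&-\xi^{-l(q-1)}\\0&0&1\end{pmatrix}$ where $\alpha\in\mathbb{F}_{q^2}^\times$ satisfies $\alpha+\alpha^q+1=0$. For a finite group $G$ and a subset $\mathcal{C}\subseteq G\setminus\{1\}$ closed under conjugation, the Killing form is $K_{\mathcal{C}}(a,b)=|C_G(ab)\cap\mathcal{C}|$ on the basis $\mathcal{C}$; it is irreducible if the graph with vertex set $\mathcal{C}$, in which distinct $a,b$ are adjacent iff $C_G(ab)\cap\mathcal{C}\neq\emptyset$, is connected. *)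

From mathcomp Require Import all_boot all_order all_algebra all_fingroup all_field.
Set Implicit Arguments. Unset Strict Implicit. Unset Printing Implicit Defensive.
Import GRing.Theory.
Local Open Scope ring_scope.

Section SU3.
Variables (F : finFieldType) (q : nat).

Definition conjtr (M : 'M[F]_3) : 'M[F]_3 := map_mx (fun x => x ^+ q) M^T.

Definition Jmx : 'M[F]_3 := \matrix_(i < 3, j < 3) (((i : nat) + j == 2)%N)%:R.

(* SU_3(q) as a set of 3x3 matrices over F = F_{q^2} *)
Definition SU3 : {set 'M[F]_3} :=
  [set M | (conjtr M *m Jmx *m M == Jmx) && (\det M == 1)].

Definition SU3_class (u : 'M[F]_3) : {set 'M[F]_3} :=
  [set invmx h *m u *m h | h in SU3].

Definition SU3_cent (x : 'M[F]_3) : {set 'M[F]_3} :=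
  [set h in SU3 | h *m x == x *m h].

Definition killing (C : {set 'M[F]_3}) (a b : 'M[F]_3) : nat :=
  #|SU3_cent (a *m b) :&: C|.

Definition killing_adj (C : {set 'M[F]_3}) : rel 'M[F]_3 :=
  fun a b => [&& a \in C, b \in C, a != b & (0 < killing C a b)%N].

Definition killing_irreducible (C : {set 'M[F]_3}) : Prop :=
  forall a b, a \in C -> b \in C -> connect (killing_adj C) a b.

Definition C3rep (x alpha : F) : 'M[F]_3 :=
  \matrix_(i < 3, j < 3)
    if i == j :> nat then 1
    else if ((i : nat) == 0%N) && ((j : nat) == 1%N) then x
    else if ((i : nat) == 0%N) && ((j : nat) == 2%N) then alpha
    else if ((i : nat) == 1%N) && ((j : nat) == 2%N) then - x^-1
    else 0.

Definition C3_0l (xi alpha : F) (l : nat) : {set 'M[F]_3} :=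
  SU3_class (C3rep (xi ^+ (l * (q - 1))) alpha).

End SU3.

From mathcomp Require Import all_boot all_order all_algebra all_fingroup all_field.
From mathcomp Require Import ring zify.
Set Implicit Arguments. Unset Strict Implicit. Unset Printing Implicit Defensive.
Import GRing.Theory.
Local Open Scope ring_scope.

(* Let u = C3rep x alpha, a regular unipotent element of G = SU_3(q), and call
   g in G linked when u and u^g lie in one connected component of the graph on
   the class of u.  Linked elements form a subgroup, and the graph is connected
   as soon as all of G is linked.  Conjugates of u under the unipotent radical U
   commute with u, so U is linked.  An explicit path u -- u' -- y0 of length
   two, whose second edge is witnessed by u^w, links w b0 for the long Weyl
   element w and an upper triangular b0; conjugating by w b0 then links the
   opposite unipotent group.  As the norm F_(q^2) -> F_q is onto, this links
   the whole Borel subgroup B, hence w, and the Bruhat decomposition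
   of G as the union of B and U w B concludes. *)

Section UnitMatrix.
Variables (R : comUnitRingType) (n : nat).
Implicit Types A B g h : 'M[R]_n.

Lemma invmx_eq A B : A \in unitmx -> B *m A = 1%:M -> invmx A = B.
Proof. by move=> uA BA1; rewrite -[RHS]mulmx1 -(mulmxV uA) mulmxA BA1 mul1mx. Qed.

Lemma invmxM A B : A \in unitmx -> B \in unitmx ->
  invmx (A *m B) = invmx B *m invmx A.
Proof.
move=> uA uB; apply: invmx_eq; first by rewrite unitmx_mul uA.
by rewrite mulmxA -(mulmxA _ _ A) mulVmx // mulmx1 mulVmx.
Qed.

Definition mxconj h A := invmx h *m A *m h.

Lemma mxconj1 A : mxconj 1%:M A = A.
Proof. by rewrite /mxconj invmx1 mul1mx mulmx1. Qed.

Lemma mxconjM g h A : g \in unitmx -> h \in unitmx ->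
  mxconj (g *m h) A = mxconj h (mxconj g A).
Proof. by move=> ug uh; rewrite /mxconj invmxM // !mulmxA. Qed.

Lemma mxconj_mulmx h A B : h \in unitmx ->
  mxconj h (A *m B) = mxconj h A *m mxconj h B.
Proof. by move=> uh; rewrite /mxconj !mulmxA mulmxK. Qed.

Lemma mxconjK h : h \in unitmx -> cancel (mxconj h) (mxconj (invmx h)).
Proof. by move=> uh A; rewrite /mxconj invmxK !mulmxA mulmxV // mul1mx mulmxK. Qed.

Lemma mxconj_inj h : h \in unitmx -> injective (mxconj h).
Proof. by move/mxconjK/can_inj. Qed.

End UnitMatrix.

Section Matrix3.
Variable R : comUnitRingType.

Definition o0 : 'I_3 := @Ordinal 3 0 isT.
Definition o1 : 'I_3 := @Ordinal 3 1 isT.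
Definition o2 : 'I_3 := @Ordinal 3 2 isT.

Definition mx3 (a b c d e f g h i : R) : 'M[R]_3 :=
  \matrix_(r < 3, s < 3)
    nth 0 (nth [::] [:: [:: a; b; c]; [:: d; e; f]; [:: g; h; i]] r) s.

Lemma ord3_ind (P : 'I_3 -> Prop) : P o0 -> P o1 -> P o2 -> forall i, P i.
Proof.
move=> P0 P1 P2 [[|[|[|n]]] lt_n3] //.
- by rewrite (_ : Ordinal lt_n3 = o0) //; apply: val_inj.
- by rewrite (_ : Ordinal lt_n3 = o1) //; apply: val_inj.
- by rewrite (_ : Ordinal lt_n3 = o2) //; apply: val_inj.
Qed.

Lemma mx3_eta (A : 'M[R]_3) :
  A = mx3 (A o0 o0) (A o0 o1) (A o0 o2) (A o1 o0) (A o1 o1) (A o1 o2)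
          (A o2 o0) (A o2 o1) (A o2 o2).
Proof. by apply/matrixP; elim/ord3_ind; elim/ord3_ind; rewrite mxE. Qed.

Lemma eq_mx3 a b c d e f g h i a' b' c' d' e' f' g' h' i' :
  a = a' -> b = b' -> c = c' -> d = d' -> e = e' -> f = f' ->
  g = g' -> h = h' -> i = i' ->
  mx3 a b c d e f g h i = mx3 a' b' c' d' e' f' g' h' i'.
Proof. by move=> *; subst. Qed.

Section Entries.
Variables a b c d e f g h i : R.
Local Notation A := (mx3 a b c d e f g h i).
Lemma mx3_00 : A o0 o0 = a. Proof. by rewrite mxE. Qed.
Lemma mx3_01 : A o0 o1 = b. Proof. by rewrite mxE. Qed.
Lemma mx3_02 : A o0 o2 = c. Proof. by rewrite mxE. Qed.
Lemma mx3_10 : A o1 o0 = d. Proof. by rewrite mxE. Qed.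
Lemma mx3_11 : A o1 o1 = e. Proof. by rewrite mxE. Qed.
Lemma mx3_12 : A o1 o2 = f. Proof. by rewrite mxE. Qed.
Lemma mx3_20 : A o2 o0 = g. Proof. by rewrite mxE. Qed.
Lemma mx3_21 : A o2 o1 = h. Proof. by rewrite mxE. Qed.
Lemma mx3_22 : A o2 o2 = i. Proof. by rewrite mxE. Qed.
End Entries.

Definition mx3E :=
  (mx3_00, mx3_01, mx3_02, mx3_10, mx3_11, mx3_12, mx3_20, mx3_21, mx3_22).

Lemma big_ord3 (F : 'I_3 -> R) : \sum_(k < 3) F k = F o0 + F o1 + F o2.
Proof.
by rewrite !big_ord_recr big_ord0 /= add0r; congr (_ + _ + _); congr F; apply: val_inj.
Qed.

Lemma mul_mx3 a b c d e f g h i a' b' c' d' e' f' g' h' i' :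
  mx3 a b c d e f g h i *m mx3 a' b' c' d' e' f' g' h' i' =
  mx3 (a*a' + b*d' + c*g') (a*b' + b*e' + c*h') (a*c' + b*f' + c*i')
      (d*a' + e*d' + f*g') (d*b' + e*e' + f*h') (d*c' + e*f' + f*i')
      (g*a' + h*d' + i*g') (g*b' + h*e' + i*h') (g*c' + h*f' + i*i').
Proof. by apply/matrixP; elim/ord3_ind; elim/ord3_ind; rewrite !mxE big_ord3 !mxE. Qed.

Lemma tr_mx3 a b c d e f g h i : (mx3 a b c d e f g h i)^T = mx3 a d g b e h c f i.
Proof. by apply/matrixP; elim/ord3_ind; elim/ord3_ind; rewrite !mxE. Qed.

Lemma map_mx3 (phi : R -> R) a b c d e f g h i :
  map_mx phi (mx3 a b c d e f g h i) =
  mx3 (phi a) (phi b) (phi c) (phi d) (phi e) (phi f) (phi g) (phi h) (phi i).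
Proof. by apply/matrixP; elim/ord3_ind; elim/ord3_ind; rewrite !mxE. Qed.

Lemma mx3_1 : 1%:M = mx3 1 0 0 0 1 0 0 0 1.
Proof. by apply/matrixP; elim/ord3_ind; elim/ord3_ind; rewrite !mxE. Qed.

Lemma det_mx3 a b c d e f g h i :
  \det (mx3 a b c d e f g h i) = a*(e*i - f*h) - b*(d*i - f*g) + c*(d*h - e*g).
Proof.
rewrite (expand_det_row _ o0) big_ord3 /cofactor.
rewrite !(expand_det_row _ ord0) !big_ord_recr big_ord0 /= /cofactor.
by rewrite !det_mx11 !mxE /= !big_ord0 !add0r !addn0 !add0n; ring.
Qed.

Definition unitri (a b c : R) : 'M[R]_3 := mx3 1 a b 0 1 c 0 0 1.

Lemma unitri_unit a b c : unitri a b c \in unitmx.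
Proof. by rewrite unitmxE det_mx3; apply/unitrP; exists 1; split; ring. Qed.

Lemma invmx_unitri a b c : invmx (unitri a b c) = unitri (- a) (a * c - b) (- c).
Proof.
apply: invmx_eq; first exact: unitri_unit.
by rewrite mul_mx3 mx3_1; apply: eq_mx3; ring.
Qed.

Lemma upper_mul (A B : 'M[R]_3) :
  A o1 o0 = 0 -> A o2 o0 = 0 -> A o2 o1 = 0 ->
  B o1 o0 = 0 -> B o2 o0 = 0 -> B o2 o1 = 0 ->
  (A *m B) o2 o0 = 0 /\ (A *m B) o0 o0 = A o0 o0 * B o0 o0.
Proof.
move=> a10 a20 a21 b10 b20 b21; rewrite [A]mx3_eta [B]mx3_eta mul_mx3 !mx3E.
by rewrite ?a10 ?a20 ?a21 ?b10 ?b20 ?b21; split; ring.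
Qed.

End Matrix3.


Section SpecialUnitary.
Variables (F : finFieldType) (q : nat).
Hypothesis q_pchar : [pchar F].-nat q.
Hypothesis card_F : #|F| = (q ^ 2)%N.

Lemma pchar_nat_gt0 : (0 < q)%N.
Proof. by case: q q_pchar. Qed.

Lemma frobD (a b : F) : (a + b) ^+ q = a ^+ q + b ^+ q.
Proof. exact: exprDn_pchar. Qed.

Lemma frob0 : (0 : F) ^+ q = 0.
Proof. by rewrite expr0n eqn0Ngt pchar_nat_gt0. Qed.

Lemma frobN (a : F) : (- a) ^+ q = - a ^+ q.
Proof. by apply/eqP; rewrite -addr_eq0 -frobD addNr frob0. Qed.

Lemma frobK (a : F) : (a ^+ q) ^+ q = a.
Proof. by rewrite -exprM mulnn -card_F expf_card. Qed.

Lemma frob_nat (n : nat) : (n%:R : F) ^+ q = n%:R.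
Proof. by elim: n => [|n IHn]; rewrite ?frob0 // -natr1 frobD IHn expr1n. Qed.

Lemma frob_eq0 (a : F) : (a ^+ q == 0) = (a == 0).
Proof. by rewrite expf_eq0 pchar_nat_gt0. Qed.

Lemma frobX (a : F) n : (a ^+ n) ^+ q = (a ^+ q) ^+ n.
Proof. exact: exprAC. Qed.

Definition frobE :=
  (frobD, frobN, frob0, frobK, frob_nat, expr1n, exprMn, exprVn, frobX).

Lemma Jmx_mx3 : Jmx F = mx3 0 0 1 0 1 0 1 0 0.
Proof. by apply/matrixP; elim/ord3_ind; elim/ord3_ind; rewrite !mxE. Qed.

Lemma conjtr_mx3 (a b c d e f g h i : F) :
  conjtr q (mx3 a b c d e f g h i) =
  mx3 (a^+q) (d^+q) (g^+q) (b^+q) (e^+q) (h^+q) (c^+q) (f^+q) (i^+q).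
Proof. by rewrite /conjtr tr_mx3 map_mx3. Qed.

Lemma conjtrM (A B : 'M[F]_3) : conjtr q (A *m B) = conjtr q B *m conjtr q A.
Proof.
rewrite [A]mx3_eta [B]mx3_eta mul_mx3 !conjtr_mx3 mul_mx3.
by apply: eq_mx3; rewrite !frobE; ring.
Qed.

Lemma conjtr1 : conjtr q 1%:M = 1%:M :> 'M[F]_3.
Proof. by rewrite mx3_1 conjtr_mx3 frob0 expr1n. Qed.

Lemma Jmx_sq : Jmx F *m Jmx F = 1%:M.
Proof. by rewrite Jmx_mx3 mul_mx3 mx3_1; apply: eq_mx3; ring. Qed.

Local Notation G := (SU3 F q).

Lemma SU3P (M : 'M[F]_3) :
  reflect (conjtr q M *m Jmx F *m M = Jmx F /\ \det M = 1) (M \in G).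
Proof. by rewrite inE; apply: (iffP andP) => -[/eqP ? /eqP ?]. Qed.

Lemma SU3_1 : 1%:M \in G.
Proof. by apply/SU3P; rewrite conjtr1 mul1mx mulmx1 det1. Qed.

Lemma SU3M (A B : 'M[F]_3) : A \in G -> B \in G -> A *m B \in G.
Proof.
move=> /SU3P[unA detA] /SU3P[unB detB]; apply/SU3P.
split; last by rewrite det_mulmx detA detB mulr1.
by rewrite conjtrM !mulmxA -(mulmxA _ (conjtr q A)) -(mulmxA _ _ A) unA unB.
Qed.

Lemma SU3_unit (A : 'M[F]_3) : A \in G -> A \in unitmx.
Proof. by move=> /SU3P[_ detA]; rewrite unitmxE detA unitr1. Qed.

Lemma invmx_SU3 (A : 'M[F]_3) : A \in G -> invmx A = Jmx F *m conjtr q A *m Jmx F.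
Proof.
move=> AG; apply: invmx_eq; first exact: SU3_unit.
by have [unA _] := SU3P _ AG; rewrite -!mulmxA (mulmxA (conjtr q A)) unA Jmx_sq.
Qed.

Lemma SU3V (A : 'M[F]_3) : A \in G -> invmx A \in G.
Proof.
move=> AG; have uA := SU3_unit AG; have [unA detA] := SU3P _ AG.
apply/SU3P; split; last by rewrite det_inv detA invr1.
have -> : conjtr q (invmx A) *m Jmx F *m invmx A =
          conjtr q (A *m invmx A) *m Jmx F *m (A *m invmx A).
  by rewrite conjtrM -{1}unA !mulmxA.
by rewrite mulmxV // conjtr1 mul1mx mulmx1.
Qed.

Lemma SU3_mxconj (h a : 'M[F]_3) : h \in G -> a \in G -> mxconj h a \in G.
Proof. by move=> hG aG; rewrite !SU3M // SU3V. Qed.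

Lemma unitri_SU3 (a b : F) :
  b + b ^+ q + a * a ^+ q = 0 -> unitri a b (- a ^+ q) \in G.
Proof.
move=> tr_ab; apply/SU3P; split; last by rewrite det_mx3; ring.
rewrite conjtr_mx3 Jmx_mx3 !mul_mx3 !frobE; apply: eq_mx3; try ring.
all: by rewrite -[RHS]tr_ab; ring.
Qed.

Lemma SU3_col0 (M : 'M[F]_3) : M \in G ->
  [/\ (M o2 o0)^+q * M o0 o0 + (M o1 o0)^+q * M o1 o0 + (M o0 o0)^+q * M o2 o0 = 0,
      (M o2 o0)^+q * M o0 o1 + (M o1 o0)^+q * M o1 o1 + (M o0 o0)^+q * M o2 o1 = 0 &
      (M o2 o0)^+q * M o0 o2 + (M o1 o0)^+q * M o1 o2 + (M o0 o0)^+q * M o2 o2 = 1].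
Proof.
move=> /SU3P[+ _]; rewrite [M]mx3_eta conjtr_mx3 Jmx_mx3 !mul_mx3 !mx3E.
move=> /(congr1 (fun A : 'M[F]_3 => (A o0 o0, A o0 o1, A o0 o2))); rewrite !mx3E.
by case=> e0 e1 e2; split; [rewrite -[RHS]e0 | rewrite -[RHS]e1 | rewrite -[RHS]e2]; ring.
Qed.

Lemma SU3_upper (M : 'M[F]_3) : M \in G -> M o2 o0 = 0 ->
  [/\ M o1 o0 = 0, M o2 o1 = 0 & M o0 o0 != 0].
Proof.
move=> MG M20; have [e0 e1 e2] := SU3_col0 MG.
move: e0; rewrite M20 frob0 !mul0r mulr0 add0r addr0 => /eqP.
rewrite mulf_eq0 frob_eq0 orbb => /eqP M10.
move: e1 e2; rewrite M20 M10 frob0 !mul0r !add0r => /eqP e1 e2.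
have M00 : M o0 o0 != 0.
  by apply/eqP => M00; move: e2; rewrite M00 frob0 mul0r => /eqP; rewrite eq_sym oner_eq0.
by move: e1; rewrite mulf_eq0 frob_eq0 (negbTE M00) => /eqP.
Qed.

Lemma SU3_unipotent (M : 'M[F]_3) : M \in G -> M o2 o0 = 0 -> M o0 o0 = 1 ->
  M = unitri (M o0 o1) (M o0 o2) (M o1 o2).
Proof.
move=> MG M20 M00; have [M10 M21 _] := SU3_upper MG M20.
have [_ _] := SU3_col0 MG; rewrite M20 M10 M00 frob0 expr1n !mul0r !add0r mul1r => M22.
have [_ +] := SU3P _ MG; rewrite {1}[M]mx3_eta det_mx3 M20 M10 M21 M00 M22 => detM.
have M11 : M o1 o1 = 1 by rewrite -[RHS]detM; ring.
by rewrite {1}[M]mx3_eta M20 M10 M21 M00 M11 M22.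
Qed.

Lemma SU3_upper_mul (A B : 'M[F]_3) : A \in G -> B \in G ->
  A o2 o0 = 0 -> B o2 o0 = 0 ->
  (A *m B) o2 o0 = 0 /\ (A *m B) o0 o0 = A o0 o0 * B o0 o0.
Proof.
move=> AG BG A20 B20; have [A10 A21 _] := SU3_upper AG A20.
by have [B10 B21 _] := SU3_upper BG B20; apply: upper_mul.
Qed.

Lemma invmx_SU3_upper (M : 'M[F]_3) : M \in G -> M o2 o0 = 0 ->
  (invmx M) o2 o0 = 0 /\ (invmx M) o0 o0 * M o0 o0 = 1.
Proof.
move=> MG M20; have iM20 : (invmx M) o2 o0 = 0.
  by rewrite invmx_SU3 // Jmx_mx3 {1}[M]mx3_eta conjtr_mx3 !mul_mx3 !mx3E M20 frob0; ring.
split=> //; have [_ <-] := SU3_upper_mul (SU3V MG) MG iM20 M20.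
by rewrite mulVmx ?SU3_unit // mx3_1 mx3E.
Qed.

Definition weyl : 'M[F]_3 := mx3 0 0 1 0 (-1) 0 1 0 0.

Lemma weyl_sq : weyl *m weyl = 1%:M.
Proof. by rewrite mul_mx3 mx3_1; apply: eq_mx3; ring. Qed.

Lemma weyl_SU3 : weyl \in G.
Proof.
apply/SU3P; split; last by rewrite det_mx3; ring.
by rewrite conjtr_mx3 Jmx_mx3 !mul_mx3 !frobE; apply: eq_mx3; ring.
Qed.

Lemma invmx_weyl : invmx weyl = weyl.
Proof. by apply: invmx_eq; [exact: SU3_unit weyl_SU3 | exact: weyl_sq]. Qed.

Lemma bruhat_big_cell (h : 'M[F]_3) : h \in G -> h o2 o0 != 0 ->
  exists a b : F,
    unitri a b (- a ^+ q) \in G /\ (weyl *m unitri a b (- a ^+ q) *m h) o2 o0 = 0.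
Proof.
move=> hG h20_neq0; have [e0 _ _] := SU3_col0 hG.
set h00 := h o0 o0 in e0 *; set h10 := h o1 o0 in e0 *.
set h20 := h o2 o0 in e0 h20_neq0 *.
pose a := (h10 / h20) ^+ q; pose b := - (h00 + a * h10) / h20.
have fh20 : h20 ^+ q != 0 by rewrite frob_eq0.
have {}e0 : h20 ^+ q * h00 = - (h10 ^+ q * h10 + h00 ^+ q * h20).
  by rewrite -[LHS]subr0 -e0; ring.
exists a, b; split.
  by apply: unitri_SU3; rewrite /b /a !frobE; field: e0; rewrite h20_neq0 fh20.
by rewrite {1}[h]mx3_eta !mul_mx3 !mx3E -/h00 -/h10 -/h20 /b; field.
Qed.

Section ClassGraph.
Variable u : 'M[F]_3.
Hypothesis uG : u \in G.
Local Notation C := (SU3_class q u).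
Local Notation adj := (killing_adj q C).

Lemma SU3_classP a : reflect (exists2 h, h \in G & a = mxconj h u) (a \in C).
Proof. by apply: (iffP imsetP) => -[h hG ->]; exists h. Qed.

Lemma class_refl : u \in C.
Proof. by apply/SU3_classP; exists 1%:M; rewrite ?SU3_1 ?mxconj1. Qed.

Lemma class_mxconj h a : h \in G -> a \in C -> mxconj h a \in C.
Proof.
move=> hG /SU3_classP[g gG ->]; apply/SU3_classP; exists (g *m h).
  exact: SU3M.
by rewrite mxconjM ?SU3_unit.
Qed.

Lemma class_sub_SU3 a : a \in C -> a \in G.
Proof. by move=> /SU3_classP[h hG ->]; exact: SU3_mxconj. Qed.

Lemma killing_gt0P a b :
  reflect (exists2 c, c \in C & c *m (a *m b) = a *m b *m c) (0 < killing q C a b)%N.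
Proof.
apply: (iffP card_gt0P) => [[c]|[c cC cab]].
  by rewrite in_setI in_set => /andP[/andP[_ /eqP cab] cC]; exists c.
by exists c; rewrite in_setI in_set class_sub_SU3 // cC cab eqxx.
Qed.

Lemma adj_mxconj h a b : h \in G -> adj a b -> adj (mxconj h a) (mxconj h b).
Proof.
move=> hG /and4P[aC bC neq_ab /killing_gt0P[c cC cab]].
have uh := SU3_unit hG.
apply/and4P; split; rewrite ?class_mxconj ?(inj_eq (mxconj_inj uh)) //.
apply/killing_gt0P; exists (mxconj h c); first exact: class_mxconj.
by rewrite -!mxconj_mulmx // cab.
Qed.

Lemma connect_mxconj h a b : h \in G ->
  connect adj a b -> connect adj (mxconj h a) (mxconj h b).
Proof.
move=> hG /connectP[p + ->]; elim: p a => [|c p IHp] a /=; first by rewrite connect0.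
by case/andP=> /(adj_mxconj hG) ac /IHp; apply: connect_trans; apply: connect1.
Qed.

(* Adjacency is defined through [a b]; [b a] is its conjugate by [a]. *)
Lemma adj_sym : symmetric adj.
Proof.
suff adj_sym a b : adj a b -> adj b a by move=> a b; apply/idP/idP; apply: adj_sym.
move=> /and4P[aC bC neq_ab /killing_gt0P[c cC cab]].
have ua := SU3_unit (class_sub_SU3 aC).
apply/and4P; split; rewrite 1?eq_sym //; apply/killing_gt0P.
exists (mxconj a c); first by rewrite class_mxconj ?class_sub_SU3.
have -> : b *m a = mxconj a (a *m b) by rewrite /mxconj !mulmxA mulVmx ?mul1mx.
by rewrite -!mxconj_mulmx // cab.
Qed.

Lemma adj_commute a b : a \in C -> b \in C -> a != b -> a *m b = b *m a -> adj a b.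
Proof.
move=> aC bC neq_ab ab_ba; apply/and4P; split=> //.
by apply/killing_gt0P; exists a => //; rewrite -mulmxA -ab_ba.
Qed.

Lemma connect_commute b : b \in C -> u *m b = b *m u -> connect adj u b.
Proof.
move=> bC ub_bu; have [<-|neq_ub] := eqVneq u b; first exact: connect0.
by apply/connect1/adj_commute; rewrite ?class_refl.
Qed.

Definition linked g := connect adj u (mxconj g u).

Lemma linkedM g h : g \in G -> h \in G -> linked g -> linked h -> linked (g *m h).
Proof.
move=> gG hG lg lh; rewrite /linked mxconjM ?SU3_unit //.
exact/(connect_trans lh)/connect_mxconj.
Qed.

Lemma linkedV g : g \in G -> linked g -> linked (invmx g).
Proof.
move=> gG /(connect_mxconj (SU3V gG)); rewrite mxconjK ?SU3_unit // => lg.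
by rewrite /linked (sym_connect_sym adj_sym).
Qed.

Lemma linked_irreducible : {in G, forall g, linked g} -> killing_irreducible q C.
Proof.
move=> lG _ _ /SU3_classP[g gG ->] /SU3_classP[h hG ->].
have := connect_mxconj gG (lG _ (SU3M hG (SU3V gG))).
by rewrite -mxconjM ?SU3_unit ?SU3M ?SU3V // -mulmxA mulVmx ?SU3_unit // mulmx1.
Qed.

Section RegularUnipotent.
Variables x alpha w : F.
Hypothesis x_neq0 : x != 0.
Hypothesis frob_x : x ^+ q = x^-1.
Hypothesis frob_alpha : alpha ^+ q = - 1 - alpha.
Hypothesis w_sq : w ^+ 2 = - 1 - w.
Hypothesis frob_w : w ^+ q = w ^+ 2.
Hypothesis three_neq0 : 3%:R != 0 :> F.
Hypothesis u_def : u = unitri x alpha (- x^-1).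

Lemma linked_unitri a b c : unitri a b c \in G -> linked (unitri a b c).
Proof.
move=> vG; apply: connect_commute; first by rewrite class_mxconj ?class_refl.
by rewrite /mxconj invmx_unitri u_def !mul_mx3; apply: eq_mx3; ring.
Qed.

(* Conjugation by [unitri (mu * x) _ _] adds [mu - mu^q] to [alpha], and
   [mu - mu^q = beta - alpha] for [mu = - (beta - alpha) w^2]. *)
Lemma unitri_conj_to (beta : F) : beta ^+ q = - 1 - beta ->
  exists a b : F, unitri a b (- a ^+ q) \in G /\
    mxconj (unitri a b (- a ^+ q)) u = unitri x beta (- x^-1).
Proof.
move=> frob_beta; pose mu := - (beta - alpha) * w ^+ 2.
have frob_mu : mu ^+ q = (beta - alpha) * w.
  by rewrite /mu !frobE frob_beta frob_alpha frob_w; ring: w_sq.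
have mu_def : mu = - (beta - alpha) * w ^+ 2 by [].
clearbody mu.
exists (mu * x), (w ^+ 2 * mu * mu ^+ q); split.
  by apply: unitri_SU3; rewrite !frobE frob_mu frob_w frob_x; field: w_sq.
rewrite /mxconj invmx_unitri u_def !mul_mx3 !frobE frob_mu frob_x.
by apply: eq_mx3; rewrite ?mu_def; field: w_sq.
Qed.

Lemma linked_unipotent M : M \in G -> M o2 o0 = 0 -> M o0 o0 = 1 -> linked M.
Proof.
move=> MG M20 M00; have M_def := SU3_unipotent MG M20 M00.
by rewrite M_def in MG *; apply: linked_unitri.
Qed.

Lemma w_sq_sub1_neq0 : w ^+ 2 - 1 != 0.
Proof.
have w_sq_sub1 : (w ^+ 2 - 1) * (w - 1) = 3%:R by ring: w_sq.
by apply: contraNneq three_neq0 => w_sq1; rewrite -w_sq_sub1 w_sq1 mul0r.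
Qed.

Definition b0 : 'M[F]_3 :=
  mx3 (- 3%:R) (- (x * (1 - w))) (- w ^+ 2)
      0 1 (- ((1 - w ^+ 2) / (3%:R * x)))
      0 0 (- 3%:R^-1).

Definition y0 : 'M[F]_3 :=
  mx3 (3%:R - 2%:R * w) (- (w * x)) (w ^+ 2)
      (3%:R * (w ^+ 2 - 1) / x) w (w / x)
      (3%:R * (w ^+ 2 - 1)) 0 w.

Lemma b0_SU3 : b0 \in G.
Proof.
apply/SU3P; rewrite /b0; split; last by rewrite det_mx3; field; rewrite x_neq0 three_neq0.
rewrite conjtr_mx3 Jmx_mx3 !mul_mx3 !frobE frob_x frob_w.
by apply: eq_mx3; field: w_sq; rewrite ?x_neq0 ?three_neq0.
Qed.

Lemma b0_20 : b0 o2 o0 = 0. Proof. by rewrite mx3E. Qed.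

Lemma mxconj_weyl_b0 :
  mxconj (weyl *m b0) (unitri x (- (2%:R + w) / 3%:R) (- x^-1)) = y0.
Proof.
have uwb := SU3_unit (SU3M weyl_SU3 b0_SU3).
rewrite /mxconj -mulmxA -[y0](mulKmx uwb); congr (_ *m _).
by rewrite /y0 !mul_mx3; apply: eq_mx3; field: w_sq; rewrite ?x_neq0 ?three_neq0.
Qed.

(* The path [u] -- [unitri x (w^2) (- x^-1)] -- [y0]: the last edge is
   witnessed by [u^weyl], and [y0] is a [U]-conjugate of [u] moved by
   [weyl *m b0]. *)
Lemma linked_weyl_b0 : linked (weyl *m b0).
Proof.
have wbG : weyl *m b0 \in G := SU3M weyl_SU3 b0_SU3.
have frob_w2 : (w ^+ 2) ^+ q = - 1 - w ^+ 2 by rewrite frobX frob_w; ring: w_sq.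
have frob_beta : (- (2%:R + w) / 3%:R) ^+ q = - 1 - (- (2%:R + w) / 3%:R).
  by rewrite !frobE frob_w; field: w_sq.
have [a1 [b1 [v1G conj_v1]]] := unitri_conj_to frob_w2.
have [a2 [b2 [v2G conj_v2]]] := unitri_conj_to frob_beta.
have vwbG := SU3M v2G wbG.
have y0_conj : y0 = mxconj (unitri a2 b2 (- a2 ^+ q) *m (weyl *m b0)) u.
  by rewrite mxconjM ?SU3_unit // conj_v2 mxconj_weyl_b0.
have adj_y0 : adj (unitri x (w ^+ 2) (- x^-1)) y0.
  apply/and4P; split.
  - by rewrite -conj_v1 class_mxconj ?class_refl.
  - by rewrite y0_conj class_mxconj ?class_refl.
  - apply/eqP => /(congr1 (fun M : 'M[F]_3 => M o2 o0)) /esym/eqP.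
    by rewrite !mx3E mulf_eq0 (negbTE three_neq0) (negbTE w_sq_sub1_neq0).
  apply/killing_gt0P; exists (mxconj weyl u).
    by rewrite class_mxconj ?weyl_SU3 ?class_refl.
  rewrite /mxconj invmx_weyl u_def /y0 !mul_mx3.
  by apply: eq_mx3; field: w_sq; rewrite ?x_neq0 ?three_neq0.
have : linked (unitri a2 b2 (- a2 ^+ q) *m (weyl *m b0)).
  rewrite /linked -y0_conj; apply: connect_trans (connect1 adj_y0).
  by rewrite -conj_v1; apply: linked_unitri.
move/(linkedM (SU3V v2G) vwbG (linkedV v2G (linked_unitri v2G))).
by rewrite mulKmx ?SU3_unit.
Qed.

Lemma linked_weyl_unipotent v : v \in G -> v o2 o0 = 0 -> v o0 o0 = 1 ->
  linked (weyl *m v *m weyl).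
Proof.
move=> vG v20 v00; have b0G := b0_SU3; have wbG := SU3M weyl_SU3 b0G.
have [ib20 ib00] := invmx_SU3_upper b0G b0_20.
have [ibv20 ibv00] := SU3_upper_mul (SU3V b0G) vG ib20 v20.
have [X20 X00] := SU3_upper_mul (SU3M (SU3V b0G) vG) b0G ibv20 b0_20.
have XG : invmx b0 *m v *m b0 \in G by rewrite !SU3M ?SU3V.
have -> : weyl *m v *m weyl =
          weyl *m b0 *m (invmx b0 *m v *m b0) *m invmx (weyl *m b0).
  by rewrite invmxM ?SU3_unit ?weyl_SU3 // invmx_weyl !mulmxA !mulmxK ?SU3_unit.
apply: linkedM (SU3M wbG XG) (SU3V wbG) _ (linkedV wbG linked_weyl_b0).
apply: linkedM wbG XG linked_weyl_b0 (linked_unipotent XG X20 _).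
by rewrite X00 ibv00 v00 mulr1.
Qed.

Hypothesis norm_surj : forall c : F, c ^+ q = c -> exists a, a * a ^+ q = c.

Lemma linked_weyl_upper (s : F) : s != 0 ->
  exists2 b, b \in G & [/\ b o2 o0 = 0, b o0 o0 = s & linked (weyl *m b)].
Proof.
move=> s_neq0.
have [a norm_a] : exists a, a * a ^+ q = - (s + s ^+ q).
  by apply: norm_surj; rewrite !frobE; ring.
have vG : unitri a s (- a ^+ q) \in G by apply: unitri_SU3; rewrite norm_a; ring.
pose n := weyl *m unitri a s (- a ^+ q) *m weyl.
have nG : n \in G by rewrite !SU3M ?weyl_SU3.
have linked_n : linked n by apply: linked_weyl_unipotent; rewrite ?mx3E.
have n20 : n o2 o0 = s by rewrite /n !mul_mx3 !mx3E; ring.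
have n20_neq0 : n o2 o0 != 0 by rewrite n20.
have [a' [b' [v'G big_cell]]] := bruhat_big_cell nG n20_neq0.
clearbody n; exists (weyl *m unitri a' b' (- a' ^+ q) *m n).
  by rewrite !SU3M ?weyl_SU3.
split=> //; first by rewrite -n20 [n]mx3_eta !mul_mx3 !mx3E; ring.
by rewrite !mulmxA weyl_sq mul1mx; apply: linkedM => //; apply: linked_unitri.
Qed.

Lemma linked_upper b : b \in G -> b o2 o0 = 0 -> linked b.
Proof.
move=> bG b20; have b0G := b0_SU3; have wbG := SU3M weyl_SU3 b0G.
have [_ _ b00] := SU3_upper bG b20; have [_ _ b0_00] := SU3_upper b0G b0_20.
have [c cG [c20 c00 linked_c]] := linked_weyl_upper (mulf_neq0 b0_00 b00).
have [ib20 ib00] := invmx_SU3_upper b0G b0_20.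
have XG : invmx b0 *m c \in G by rewrite SU3M ?SU3V.
have linked_X : linked (invmx b0 *m c).
  have -> : invmx b0 *m c = invmx (weyl *m b0) *m (weyl *m c).
    rewrite invmxM ?SU3_unit ?weyl_SU3 // invmx_weyl.
    by rewrite -mulmxA (mulmxA weyl) weyl_sq mul1mx.
  exact: linkedM (SU3V wbG) (SU3M weyl_SU3 cG) (linkedV wbG linked_weyl_b0) linked_c.
have [X20 X00] := SU3_upper_mul (SU3V b0G) cG ib20 c20.
have [iX20 iX00] := invmx_SU3_upper XG X20.
have [Y20 Y00] := SU3_upper_mul (SU3V XG) bG iX20 b20.
have YG := SU3M (SU3V XG) bG.
rewrite -(mulKVmx (SU3_unit XG) b); apply: (linkedM XG YG linked_X).
apply: (linked_unipotent YG Y20).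
by rewrite Y00 -[b o0 o0]mul1r -ib00 -mulrA -c00 -X00 iX00.
Qed.

Lemma linked_weyl : linked weyl.
Proof.
have b0G := b0_SU3; have [ib20 _] := invmx_SU3_upper b0G b0_20.
rewrite -(mulmxK (SU3_unit b0G) weyl).
apply: linkedM (SU3M weyl_SU3 b0G) (SU3V b0G) linked_weyl_b0 _.
exact: linked_upper (SU3V b0G) ib20.
Qed.

Lemma linked_SU3 : {in G, forall h, linked h}.
Proof.
move=> h hG; have [h20|h20] := eqVneq (h o2 o0) 0; first exact: linked_upper.
have [a [b [vG big_cell]]] := bruhat_big_cell hG h20.
set v := unitri a b _ in vG big_cell.
have wvG : weyl *m v \in G by rewrite SU3M ?weyl_SU3.
have wvhG : weyl *m v *m h \in G by rewrite SU3M.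
rewrite -(mulKmx (SU3_unit wvG) h) invmxM ?SU3_unit ?weyl_SU3 // invmx_weyl.
apply: linkedM (SU3M (SU3V vG) weyl_SU3) wvhG _ (linked_upper wvhG big_cell).
exact: linkedM (SU3V vG) weyl_SU3 (linkedV vG (linked_unitri vG)) linked_weyl.
Qed.

End RegularUnipotent.

End ClassGraph.

End SpecialUnitary.


Lemma prime_power_pchar (F : finFieldType) (q : nat) :
  (exists p k : nat, [/\ prime p, (0 < k)%N & q = (p ^ k)%N]) ->
  #|F| = (q ^ 2)%N -> [pchar F].-nat q.
Proof.
move=> [p [k [p_pr _ ->]]] card_F; rewrite pnatX (pnatE _ p_pr).
by rewrite (@card_finPcharP _ p (k * 2)) // card_F expnM.
Qed.

Lemma sqrn_sub1 (q : nat) : (0 < q)%N -> (q ^ 2 - 1 = (q + 1) * (q - 1))%N.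
Proof. by move=> q_gt0; rewrite mulnBr muln1 mulnDl mul1n mulnn; lia. Qed.

Section PrimitiveRoot.
Variables (F : finFieldType) (q : nat) (xi : F).
Hypothesis q_gt1 : (1 < q)%N.
Hypothesis xi_prim : (q ^ 2 - 1).-primitive_root xi.
Let q_gt0 : (0 < q)%N := ltnW q_gt1.

Lemma prim_root_neq0 : xi != 0.
Proof. by rewrite (prim_root_eq0 xi_prim) subn_eq0 -ltnNge; nia. Qed.

Lemma expr_norm1 m : (xi ^+ (m * (q - 1))) ^+ q = (xi ^+ (m * (q - 1)))^-1.
Proof.
have y_neq0 : xi ^+ (m * (q - 1)) != 0 by rewrite expf_neq0 ?prim_root_neq0.
apply: (mulIf y_neq0); rewrite mulVf // -exprSr -exprM.
have -> : (m * (q - 1) * q.+1 = (q ^ 2 - 1) * m)%N by rewrite sqrn_sub1 //; ring.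
by rewrite exprM (prim_expr_order xi_prim) expr1n.
Qed.

Lemma norm_surjective : #|F| = (q ^ 2)%N ->
  forall c : F, c ^+ q = c -> exists a, a * a ^+ q = c.
Proof.
move=> card_F c frob_c; have [->|c_neq0] := eqVneq c 0; first by exists 0; rewrite mul0r.
have c_unity : c ^+ (q ^ 2 - 1) = 1.
  apply: (mulIf c_neq0); rewrite mul1r -exprSr subn1 prednK ?expn_gt0 ?q_gt0 //.
  by rewrite -card_F expf_card.
have [[i _] /= c_def] := prim_rootP xi_prim c_unity.
have : (q ^ 2 - 1 %| i * (q - 1))%N.
  rewrite (prim_order_dvd xi_prim); apply/eqP.
  apply: (mulIf (expf_neq0 i prim_root_neq0)); rewrite mul1r -exprD.
  by rewrite -{2}(muln1 i) -mulnDr subnK // exprM -c_def frob_c.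
rewrite sqrn_sub1 // dvdn_pmul2r ?subn_gt0 // => /dvdnP[j i_def].
by exists (xi ^+ j); rewrite -exprM -exprD c_def i_def; congr (_ ^+ _); ring.
Qed.

Lemma cube_root_unity : (q %% 3 = 2)%N ->
  exists w : F, [/\ w ^+ 2 = - 1 - w, w ^+ q = w ^+ 2 & 3%:R != 0 :> F].
Proof.
move=> q_mod3; have dvd3 : (3 %| q ^ 2 - 1)%N.
  by rewrite sqrn_sub1 // dvdn_mulr // /dvdn -modnDml q_mod3.
have w_prim := dvdn_prim_root xi_prim dvd3.
set w := xi ^+ _ in w_prim; exists w.
have w_neq1 : w != 1 by move: (prim_order_dvd w_prim 1); rewrite expr1 => <-.
have : (w - 1) * (w ^+ 2 + w + 1) = 0.
  by rewrite -(subrr 1) -{3}(prim_expr_order w_prim); ring.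
move/eqP; rewrite mulf_eq0 subr_eq0 (negbTE w_neq1) => /eqP w_poly; split.
- by rewrite -[LHS]subr0 -w_poly; ring.
- by rewrite -(prim_expr_mod w_prim) q_mod3.
- exact: prim_root_dvd_eq0 xi_prim _ dvd3.
Qed.

End PrimitiveRoot.

Lemma C3rep_unitri (F : finFieldType) (x alpha : F) :
  C3rep x alpha = unitri x alpha (- x^-1).
Proof. by apply/matrixP; elim/ord3_ind; elim/ord3_ind; rewrite !mxE. Qed.

Lemma C3rep_killing_irreducible (F : finFieldType) (q : nat) (x alpha w : F) :
  [pchar F].-nat q -> #|F| = (q ^ 2)%N ->
  x != 0 -> x ^+ q = x^-1 -> alpha + alpha ^+ q + 1 = 0 ->
  w ^+ 2 = - 1 - w -> w ^+ q = w ^+ 2 -> 3%:R != 0 :> F ->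
  (forall c : F, c ^+ q = c -> exists a, a * a ^+ q = c) ->
  killing_irreducible q (SU3_class q (C3rep x alpha)).
Proof.
move=> q_pchar card_F x_neq0 frob_x alpha_tr w_sq frob_w three_neq0 norm_surj.
have frob_alpha : alpha ^+ q = - 1 - alpha by rewrite -[LHS]subr0 -alpha_tr; ring.
have uG : C3rep x alpha \in SU3 F q.
  by rewrite C3rep_unitri -frob_x; apply: (unitri_SU3 q_pchar card_F); rewrite frob_x mulfV.
apply: (linked_irreducible q_pchar uG).
exact: (linked_SU3 q_pchar card_F uG x_neq0 frob_x frob_alpha w_sq frob_w three_neq0
  (C3rep_unitri x alpha) norm_surj).
Qed.

Theorem proposition4p12 (F : finFieldType) (q : nat) (xi alpha : F) (l : nat) :
  (exists p k : nat, [/\ prime p, (0 < k)%N & q = (p ^ k)%N]) ->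
  q <> 2%N ->
  (q %% 3 = 2)%N ->
  #|F| = (q ^ 2)%N ->
  (q ^ 2 - 1).-primitive_root xi ->
  alpha != 0 -> alpha + alpha ^+ q + 1 = 0 ->
  (l <= 2)%N ->
  killing_irreducible q (C3_0l q xi alpha l).
Proof.
move=> q_pp _ q_mod3 card_F xi_prim _ alpha_tr _.
have q_gt1 : (1 < q)%N.
  by case: q_pp => p [k [p_pr k_gt0 ->]]; rewrite -(expn0 p) ltn_exp2l ?prime_gt1.
have [w [w_sq frob_w three_neq0]] := cube_root_unity q_gt1 xi_prim q_mod3.
exact: C3rep_killing_irreducible (prime_power_pchar q_pp card_F) card_F
  (expf_neq0 _ (prim_root_neq0 q_gt1 xi_prim)) (expr_norm1 q_gt1 xi_prim l)
  alpha_tr w_sq frob_w three_neq0 (norm_surjective q_gt1 xi_prim card_F).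
Qed.
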